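(* Let $P$ be as in the context. If $x_a\ge x_\theta\ge0$ and $x_b\ge0$, then $$P(x_a,x_b,x_\theta)\ge\tfrac12\big(1-\Phi(x_a-x_\theta)\big)+\tfrac12\big(1-\Phi(x_a+x_\theta)\big).$$ If $0\le x_a<x_\theta$ and $x_b\ge0$, then $P(x_a,x_b,x_\theta)\ge\tfrac14$.
   Context: $\phi$ and $\Phi$ are the standard normal density and CDF. For $y,x_b\in\mathbb{R}$, $w(y,x_b)=\frac{e^{yx_b}}{e^{yx_b}+e^{-yx_b}}$, and $P(x_a,x_b,x_\theta)=\int_{\mathbb{R}}w(y-x_a,x_b)\,\tfrac12\big(\phi(y-x_\theta)+\phi(y+x_\theta)\big)dy$. *)

From Stdlib Require Import Reals.
From Coquelicot Require Import Coquelicot.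
Open Scope R_scope.

Definition phi (x : R) : R := exp (- x ^ 2 / 2) / sqrt (2 * PI).

Definition Phi (x : R) : R :=
  RInt_gen phi (Rbar_locally m_infty) (at_point x).

Definition w (y xb : R) : R :=
  exp (y * xb) / (exp (y * xb) + exp (- (y * xb))).

Definition P (xa xb xt : R) : R :=
  RInt_gen (fun y => w (y - xa) xb * (/ 2 * (phi (y - xt) + phi (y + xt))))
    (Rbar_locally m_infty) (Rbar_locally p_infty).

From Stdlib Require Import Reals Lra Classical.
From Coquelicot Require Import Coquelicot.
Open Scope R_scope.

(* Pair the integrand of P at c - s and c + s.  Since w(-s) + w(s) = 1 and each Gaussian
   bump is larger on the near side of its centre than on the far side, the pair is bounded
   below by an explicit Gaussian: by the far-side tails (phi(s + xa - xt) + phi(s + xa + xt))/2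
   when xa >= xt (take c = xa), and by phi(s)/2 when xa <= xt (take c = xt, using that w
   increases in y when xb >= 0).
   The normalisation of phi rests on the identity
   (int_0^x e^(-t^2))^2 + int_0^1 e^(-x^2 (1 + t^2)) / (1 + t^2) dt = PI/4,
   whose left side has zero derivative; P exists because the partial integrals of its
   nonnegative integrand are monotone and bounded. *)

Ltac continuous_by_derive :=
  apply (@ex_derive_continuous R_AbsRing R_NormedModule); auto_derive.

Lemma exp_le_exp a b : a <= b -> exp a <= exp b.
Proof. intros [h | ->]; [now left; apply exp_increasing | now right]. Qed.

Section ContinuousIntegrand.

Variable f : R -> R.
Hypothesis f_cont : forall x, continuous f x.

Lemma ex_RInt_cont a b : ex_RInt f a b.
Proof. apply (@ex_RInt_continuous R_CompleteNormedModule); intros; apply f_cont. Qed.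

Lemma is_derive_RInt_0 x : is_derive (RInt f 0) x (f x).
Proof.
  apply is_derive_RInt with 0; [| apply f_cont].
  apply filter_forall; intros; apply RInt_correct, ex_RInt_cont.
Qed.

Lemma is_RInt_gen_primitive (Fa Fb : (R -> Prop) -> Prop) {FFa : Filter Fa} {FFb : Filter Fb}
  (la lb : R) :
  filterlim (RInt f 0) Fa (locally la) -> filterlim (RInt f 0) Fb (locally lb) ->
  is_RInt_gen f Fa Fb (lb - la).
Proof.
  intros Ha Hb.
  assert (D : forall x, Derive (RInt f 0) x = f x)
    by (intros; apply is_derive_unique, is_derive_RInt_0).
  apply (is_RInt_gen_ext (Derive (RInt f 0))).
  { apply filter_forall; intros; apply D. }
  apply is_RInt_gen_Derive; auto; apply filter_forall; intros.
  - eexists; apply is_derive_RInt_0.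
  - apply (continuous_ext f); [intros; symmetry; apply D | apply f_cont].
Qed.

Lemma continuous_reflect c x : continuous (fun y => f (c - y)) x.
Proof.
  apply (continuous_comp (fun y => c - y) f); [continuous_by_derive; trivial | apply f_cont].
Qed.

Lemma continuous_translate c x : continuous (fun y => f (c + y)) x.
Proof.
  apply (continuous_comp (fun y => c + y) f); [continuous_by_derive; trivial | apply f_cont].
Qed.

Lemma RInt_Chasles_cont a b c : RInt f a b + RInt f b c = RInt f a c.
Proof. apply (@RInt_Chasles R_CompleteNormedModule); apply ex_RInt_cont. Qed.

Lemma RInt_swap_cont a b : RInt f a b = - RInt f b a :> R.
Proof. generalize (RInt_Chasles_cont a b a); rewrite RInt_point; unfold zero; simpl; lra. Qed.

Lemma RInt_0_incr : (forall x, 0 <= f x) -> forall a b, a <= b -> RInt f 0 a <= RInt f 0 b.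
Proof.
  intros Hf a b Hab. rewrite <- (RInt_Chasles_cont 0 a b).
  assert (0 <= RInt f a b) by (apply RInt_ge_0; auto using ex_RInt_cont).
  simpl; lra.
Qed.

Lemma RInt_comp_affine u v a b :
  RInt (fun y => u * f (u * y + v)) a b = RInt f (u * a + v) (u * b + v) :> R.
Proof. apply (@RInt_comp_lin R_CompleteNormedModule), ex_RInt_cont. Qed.

Lemma RInt_shift c a b : RInt (fun y => f (y + c)) a b = RInt f (a + c) (b + c) :> R.
Proof.
  replace (a + c) with (1 * a + c) by ring. replace (b + c) with (1 * b + c) by ring.
  rewrite <- RInt_comp_affine.
  apply RInt_ext; intros; rewrite !Rmult_1_l; reflexivity.
Qed.

Lemma RInt_reflect c a b : RInt (fun y => f (c - y)) a b = RInt f (c - b) (c - a) :> R.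
Proof.
  rewrite (RInt_swap_cont (c - b)).
  replace (c - b) with (-1 * b + c) by ring. replace (c - a) with (-1 * a + c) by ring.
  rewrite <- RInt_comp_affine.
  rewrite (RInt_ext (fun y => -1 * f (-1 * y + c)) (fun y => scal (-1) (f (c - y))))
    by (intros; change (scal ?k ?z) with (k * z); do 2 f_equal; ring).
  rewrite (@RInt_scal R_CompleteNormedModule)
    by (apply ex_RInt_continuous; intros; apply continuous_reflect).
  unfold scal; simpl; unfold mult; simpl; lra.
Qed.

Lemma RInt_symmetrize c M :
  RInt f 0 (c + M) - RInt f 0 (c - M) = RInt (fun s => f (c - s) + f (c + s)) 0 M.
Proof.
  rewrite (@RInt_plus R_CompleteNormedModule)
    by (apply ex_RInt_continuous; intros; auto using continuous_reflect, continuous_translate).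
  rewrite RInt_reflect, (RInt_ext (fun s => f (c + s)) (fun s => f (s + c)))
    by (intros; f_equal; ring).
  rewrite RInt_shift, <- (RInt_Chasles_cont 0 c (c + M)), <- (RInt_Chasles_cont 0 c (c - M)).
  replace (c - 0) with c by ring; replace (0 + c) with c by ring.
  replace (M + c) with (c + M) by ring.
  rewrite (RInt_swap_cont c (c - M)). unfold plus; simpl; ring.
Qed.

End ContinuousIntegrand.

Lemma is_lim_p_shift (F : R -> R) (L : Rbar) c :
  is_lim F p_infty L -> is_lim (fun M => F (c + M)) p_infty L.
Proof.
  intros HL; apply (is_lim_comp F (fun M => c + M) p_infty L p_infty); auto.
  - apply is_lim_spec; intros K; exists (K - c); intros; lra.
  - exists 0; intros; discriminate.
Qed.

Lemma is_lim_m_reflect (F : R -> R) (L : Rbar) c :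
  is_lim F m_infty L -> is_lim (fun M => F (c - M)) p_infty L.
Proof.
  intros HL; apply (is_lim_comp F (fun M => c - M) p_infty L m_infty); auto.
  - apply is_lim_spec; intros K; exists (c - K); intros; lra.
  - exists 0; intros; discriminate.
Qed.

Lemma is_lim_p_reflect (F : R -> R) (L : Rbar) c :
  is_lim F p_infty L -> is_lim (fun M => F (c - M)) m_infty L.
Proof.
  intros HL; apply (is_lim_comp F (fun M => c - M) m_infty L p_infty); auto.
  - apply is_lim_spec; intros K; exists (c - K); intros; lra.
  - exists 0; intros; discriminate.
Qed.

Section IncreasingFunction.

Variable F : R -> R.
Hypothesis F_incr : forall a b, a <= b -> F a <= F b.

Lemma incr_le_lim_p (L : R) x : is_lim F p_infty L -> F x <= L.
Proof.
  intros HL; apply (is_lim_le_loc (fun _ => F x) F p_infty (F x) L); auto.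
  - exists x; intros; apply F_incr; lra.
  - apply is_lim_const.
Qed.

Lemma incr_lim_m_le (L : R) x : is_lim F m_infty L -> L <= F x.
Proof.
  intros HL; apply (is_lim_le_loc F (fun _ => F x) m_infty L (F x)); auto.
  - exists x; intros; apply F_incr; lra.
  - apply is_lim_const.
Qed.

Lemma incr_bounded_ex_lim_p B : (forall x, F x <= B) -> exists L : R, is_lim F p_infty L.
Proof.
  intros HB.
  destruct (completeness (fun y => exists x, y = F x)) as [L [Lub Lleast]].
  { exists B; intros y [x ->]; apply HB. }
  { exists (F 0), 0; reflexivity. }
  exists L; apply is_lim_spec; intros eps.
  assert (Hx0 : exists x0, L - eps < F x0).
  { apply NNPP; intros Hno.
    assert (L <= L - eps) by (apply Lleast; intros y [x ->]; apply Rnot_lt_le; eauto).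
    destruct eps; simpl in *; lra. }
  destruct Hx0 as [x0 Hx0]; exists x0; intros y Hy.
  assert (F x0 <= F y) by (apply F_incr; lra).
  assert (F y <= L) by (apply Lub; eauto).
  apply Rabs_lt_between'; lra.
Qed.

End IncreasingFunction.

Lemma incr_bounded_ex_lim_m (F : R -> R) B :
  (forall a b, a <= b -> F a <= F b) -> (forall x, B <= F x) -> exists L : R, is_lim F m_infty L.
Proof.
  intros Hincr HB.
  destruct (incr_bounded_ex_lim_p (fun x => - F (0 - x))) with (B := - B) as [L HL].
  - intros a b Hab; generalize (Hincr (0 - b) (0 - a)); lra.
  - intros x; generalize (HB (0 - x)); lra.
  - exists (- L).
    apply (is_lim_ext (fun M => - (- F (0 - (0 - M)))));
      [intros; rewrite Ropp_involutive; f_equal; ring |].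
    apply (is_lim_opp _ m_infty L), (is_lim_p_reflect (fun x => - F (0 - x))), HL.
Qed.

Definition gauss (t : R) : R := exp (- t ^ 2).
Definition gauss_int (x : R) : R := RInt gauss 0 x.
Definition gauss_kernel (u t : R) : R := exp (- u ^ 2 * (1 + t ^ 2)) / (1 + t ^ 2).
Definition gauss_aux (u : R) : R := RInt (gauss_kernel u) 0 1.

Lemma one_plus_sqr_neq0 t : 1 + t ^ 2 <> 0.
Proof. nra. Qed.

Lemma gauss_cont x : continuous gauss x.
Proof. unfold gauss; continuous_by_derive; trivial. Qed.

Lemma gauss_kernel_cont u t : continuous (gauss_kernel u) t.
Proof. unfold gauss_kernel; continuous_by_derive; apply one_plus_sqr_neq0. Qed.

Lemma Derive_gauss_kernel u t :
  Derive (fun z => gauss_kernel z t) u = -2 * u * exp (- u ^ 2 * (1 + t ^ 2)).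
Proof.
  apply is_derive_unique; unfold gauss_kernel; auto_derive;
    [repeat split; apply one_plus_sqr_neq0 |].
  replace (u * (u * 1)) with (u ^ 2) by ring; replace (t * (t * 1)) with (t ^ 2) by ring.
  field; apply one_plus_sqr_neq0.
Qed.

Lemma continuity_2d_pt_sqr (f : R -> R -> R) x y :
  continuity_2d_pt f x y -> continuity_2d_pt (fun u v => f u v ^ 2) x y.
Proof.
  intros H; apply continuity_2d_pt_ext with (fun u v => f u v * (f u v * 1));
    [intros; reflexivity |].
  repeat apply continuity_2d_pt_mult; auto using continuity_2d_pt_const.
Qed.

Lemma is_derive_gauss_int x : is_derive gauss_int x (gauss x).
Proof. apply is_derive_RInt_0, gauss_cont. Qed.

(* The substitution s = u t turns the t-integral into gauss_int u. *)
Lemma RInt_Derive_gauss_kernel u :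
  RInt (fun t => Derive (fun z => gauss_kernel z t) u) 0 1 = -2 * gauss u * gauss_int u.
Proof.
  assert (C : forall s, continuous (fun t => u * gauss (u * t + 0)) s).
  { intros; unfold gauss; continuous_by_derive; trivial. }
  rewrite (RInt_ext _ (fun t => scal (-2 * gauss u) (u * gauss (u * t + 0)))).
  - rewrite (@RInt_scal R_CompleteNormedModule) by (apply ex_RInt_continuous; auto).
    rewrite (RInt_comp_affine gauss gauss_cont).
    replace (u * 0 + 0) with 0 by ring. replace (u * 1 + 0) with u by ring. reflexivity.
  - intros t _; rewrite Derive_gauss_kernel; change (scal ?a ?b) with (a * b); unfold gauss.
    replace (- u ^ 2 * (1 + t ^ 2)) with (- u ^ 2 + - (u * t + 0) ^ 2) by ring.
    rewrite exp_plus; simpl; ring.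
Qed.

Lemma is_derive_gauss_aux x : is_derive gauss_aux x (-2 * gauss x * gauss_int x).
Proof.
  rewrite <- RInt_Derive_gauss_kernel.
  apply (is_derive_RInt_param gauss_kernel).
  - apply filter_forall; intros y t _; unfold gauss_kernel; auto_derive.
    repeat split; apply one_plus_sqr_neq0.
  - intros t _; eapply continuity_2d_pt_ext; [intros; symmetry; apply Derive_gauss_kernel |].
    apply continuity_2d_pt_mult.
    + apply continuity_2d_pt_mult; [apply continuity_2d_pt_const | apply continuity_2d_pt_id1].
    + apply continuity_1d_2d_pt_comp; [apply derivable_continuous_pt, derivable_pt_exp |].
      apply continuity_2d_pt_mult.
      * apply continuity_2d_pt_opp, continuity_2d_pt_sqr, continuity_2d_pt_id1.
      * apply continuity_2d_pt_plus;
          [apply continuity_2d_pt_const | apply continuity_2d_pt_sqr, continuity_2d_pt_id2].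
  - apply filter_forall; intros; apply ex_RInt_cont, gauss_kernel_cont.
Qed.

Lemma gauss_aux_0 : gauss_aux 0 = PI / 4.
Proof.
  unfold gauss_aux; rewrite (RInt_ext _ (fun t => / (1 + t ^ 2))).
  - rewrite (is_RInt_unique _ _ _ (atan 1 - atan 0)), atan_1, atan_0; [field |].
    apply (@is_RInt_derive R_CompleteNormedModule atan).
    + intros; apply is_derive_Reals, derivable_pt_lim_atan.
    + intros; continuous_by_derive; apply one_plus_sqr_neq0.
  - intros t _; unfold gauss_kernel.
    replace (- 0 ^ 2 * (1 + t ^ 2)) with 0 by ring; rewrite exp_0; apply Rmult_1_l.
Qed.

Lemma gauss_int_sqr_plus_aux x : gauss_int x ^ 2 + gauss_aux x = PI / 4.
Proof.
  assert (D : forall t, is_derive (fun x => gauss_int x ^ 2 + gauss_aux x) t zero).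
  { intros t; evar (d : R); replace (@zero R_NormedModule) with d.
    - apply (is_derive_plus (fun x => gauss_int x ^ 2) gauss_aux);
        [apply (is_derive_pow gauss_int 2), is_derive_gauss_int | apply is_derive_gauss_aux].
    - unfold d, plus, zero; simpl; ring. }
  assert (H0 : gauss_int 0 ^ 2 + gauss_aux 0 = PI / 4).
  { unfold gauss_int; rewrite RInt_point, gauss_aux_0; unfold zero; simpl; ring. }
  rewrite <- H0; destruct (Rtotal_order x 0) as [h | [-> | h]]; [| reflexivity |].
  - apply (eq_is_derive (fun x => gauss_int x ^ 2 + gauss_aux x)); auto.
  - symmetry; apply (eq_is_derive (fun x => gauss_int x ^ 2 + gauss_aux x)); auto.
Qed.

Lemma gauss_aux_bounds x : 0 <= gauss_aux x <= exp (- x ^ 2).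
Proof.
  assert (Ex : ex_RInt (gauss_kernel x) 0 1) by apply ex_RInt_cont, gauss_kernel_cont.
  split.
  - apply RInt_ge_0; [lra | exact Ex |]; intros t _; unfold gauss_kernel.
    apply Rlt_le, Rdiv_lt_0_compat; [apply exp_pos | nra].
  - apply Rle_trans with (RInt (fun _ => exp (- x ^ 2)) 0 1).
    + apply RInt_le; [lra | exact Ex | apply ex_RInt_const |]; intros t _; unfold gauss_kernel.
      assert (0 <= t ^ 2) by nra.
      assert (exp (- x ^ 2 * (1 + t ^ 2)) <= exp (- x ^ 2)) by (apply exp_le_exp; nra).
      assert (/ (1 + t ^ 2) <= 1) by (rewrite <- Rinv_1; apply Rinv_le_contravar; lra).
      unfold Rdiv; generalize (exp_pos (- x ^ 2 * (1 + t ^ 2))); nra.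
    + rewrite RInt_const; unfold scal; simpl; unfold mult; simpl; lra.
Qed.

Lemma is_lim_gauss_aux : is_lim gauss_aux p_infty 0.
Proof.
  apply (is_lim_le_le_loc (fun _ => 0) (fun x => exp (- x))).
  - exists 1; intros y Hy; split; [apply gauss_aux_bounds |].
    apply Rle_trans with (exp (- y ^ 2)); [apply gauss_aux_bounds | apply exp_le_exp; nra].
  - apply is_lim_const.
  - apply (is_lim_comp exp (fun x => - x) p_infty 0 m_infty); [apply is_lim_exp_m | |].
    + apply (is_lim_opp (fun y => y) p_infty p_infty), is_lim_id.
    + exists 0; intros; discriminate.
Qed.

Lemma gauss_int_nonneg x : 0 <= x -> 0 <= gauss_int x.
Proof.
  intros; apply RInt_ge_0; auto using ex_RInt_cont, gauss_cont.
  intros; apply Rlt_le, exp_pos.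
Qed.

Lemma is_lim_gauss_int : is_lim gauss_int p_infty (sqrt PI / 2).
Proof.
  apply is_lim_ext_loc with (fun x => sqrt (PI / 4 - gauss_aux x)).
  { exists 0; intros y Hy; rewrite <- (gauss_int_sqr_plus_aux y).
    replace (gauss_int y ^ 2 + gauss_aux y - gauss_aux y) with (gauss_int y ^ 2) by ring.
    apply sqrt_pow2, gauss_int_nonneg; lra. }
  replace (sqrt PI / 2) with (sqrt (PI / 4 - 0)).
  - eapply filterlim_comp; [apply (is_lim_minus' (fun _ => PI / 4) gauss_aux p_infty);
      [apply is_lim_const | apply is_lim_gauss_aux] |].
    apply continuity_pt_filterlim, continuity_pt_sqrt; generalize PI_RGT_0; lra.
  - rewrite Rminus_0_r, sqrt_div_alt by lra.
    replace 4 with (2 ^ 2) by ring; rewrite sqrt_pow2; lra.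
Qed.

Lemma sqrt_2PI_pos : 0 < sqrt (2 * PI).
Proof. apply sqrt_lt_R0; generalize PI_RGT_0; lra. Qed.

Lemma phi_cont x : continuous phi x.
Proof. unfold phi; continuous_by_derive; generalize sqrt_2PI_pos; lra. Qed.

Lemma phi_pos x : 0 < phi x.
Proof. apply Rdiv_lt_0_compat; [apply exp_pos | apply sqrt_2PI_pos]. Qed.

Lemma phi_opp x : phi (- x) = phi x.
Proof. unfold phi; do 3 f_equal; ring. Qed.

Lemma phi_add_le_sub a s : 0 <= a -> 0 <= s -> phi (a + s) <= phi (a - s).
Proof.
  intros; apply Rmult_le_compat_r; [apply Rlt_le, Rinv_0_lt_compat, sqrt_2PI_pos |].
  apply exp_le_exp; nra.
Qed.

Lemma phi_shift_cont c x : continuous (fun y => phi (y + c)) x.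
Proof. unfold phi; continuous_by_derive; generalize sqrt_2PI_pos; lra. Qed.

Lemma scal_phi_shift_cont k c x : continuous (fun y => k * phi (y + c)) x.
Proof. unfold phi; continuous_by_derive; generalize sqrt_2PI_pos; lra. Qed.

Definition Phi0 (x : R) : R := RInt phi 0 x.

Lemma Phi0_gauss_int x : Phi0 x = / sqrt PI * gauss_int (x / sqrt 2).
Proof.
  assert (s2 : 0 < sqrt 2) by (apply sqrt_lt_R0; lra).
  assert (sPI : 0 < sqrt PI) by (apply sqrt_lt_R0, PI_RGT_0).
  unfold Phi0, gauss_int.
  replace 0 with (/ sqrt 2 * 0 + 0) at 2 by ring.
  replace (x / sqrt 2) with (/ sqrt 2 * x + 0) by (field; lra).
  rewrite <- (RInt_comp_affine gauss gauss_cont).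
  rewrite <- (@RInt_scal R_CompleteNormedModule).
  - apply RInt_ext; intros y _; change (scal ?a ?b) with (a * b); unfold phi, gauss.
    replace ((/ sqrt 2 * y + 0) ^ 2) with (y ^ 2 / (sqrt 2 * sqrt 2)) by (field; lra).
    rewrite sqrt_sqrt, sqrt_mult by (generalize PI_RGT_0; lra).
    replace (- (y ^ 2 / 2)) with (- y ^ 2 / 2) by field.
    simpl; field; lra.
  - apply ex_RInt_cont; intros; unfold gauss; continuous_by_derive; trivial.
Qed.

Lemma is_lim_Phi0_p : is_lim Phi0 p_infty (/ 2).
Proof.
  assert (s2 : 0 < sqrt 2) by (apply sqrt_lt_R0; lra).
  assert (sPI : 0 < sqrt PI) by (apply sqrt_lt_R0, PI_RGT_0).
  apply (is_lim_ext (fun x => / sqrt PI * gauss_int (x / sqrt 2)));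
    [intros; symmetry; apply Phi0_gauss_int |].
  replace (/ 2) with (/ sqrt PI * (sqrt PI / 2)) by (field; lra).
  apply (is_lim_scal_l _ (/ sqrt PI) p_infty (sqrt PI / 2)).
  apply (is_lim_comp gauss_int (fun x => x / sqrt 2) p_infty _ p_infty);
    [apply is_lim_gauss_int | | exists 0; intros; discriminate].
  apply is_lim_spec; intros M; exists (Rabs M * sqrt 2); intros x Hx.
  assert (Rabs M < x / sqrt 2) by (apply Rlt_div_r; lra).
  generalize (Rle_abs M); lra.
Qed.

Lemma Phi0_opp x : Phi0 (- x) = - Phi0 x.
Proof.
  unfold Phi0; transitivity (- RInt phi (0 - x) (0 - 0)).
  - rewrite Rminus_0_r, Rminus_0_l, (RInt_swap_cont phi phi_cont (- x)), Ropp_involutive.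
    reflexivity.
  - rewrite <- (RInt_reflect phi phi_cont 0 0 x).
    f_equal; apply RInt_ext; intros; rewrite Rminus_0_l; apply phi_opp.
Qed.

Lemma is_lim_Phi0_m : is_lim Phi0 m_infty (- / 2).
Proof.
  apply (is_lim_ext (fun x => - Phi0 (0 - x))); [intros; rewrite Rminus_0_l, Phi0_opp; ring |].
  apply (is_lim_opp _ m_infty (/ 2)), (is_lim_p_reflect Phi0), is_lim_Phi0_p.
Qed.

Lemma Phi0_incr a b : a <= b -> Phi0 a <= Phi0 b.
Proof. apply RInt_0_incr; [apply phi_cont | intros; apply Rlt_le, phi_pos]. Qed.

Lemma Phi0_bounds x : - / 2 <= Phi0 x <= / 2.
Proof.
  split; [apply (incr_lim_m_le Phi0 Phi0_incr), is_lim_Phi0_m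
         | apply (incr_le_lim_p Phi0 Phi0_incr), is_lim_Phi0_p].
Qed.

Lemma RInt_phi_le_1 u v : RInt phi u v <= 1.
Proof.
  rewrite <- (RInt_Chasles_cont phi phi_cont u 0 v), (RInt_swap_cont phi phi_cont u 0).
  generalize (Phi0_bounds u) (Phi0_bounds v); unfold Phi0; lra.
Qed.

Lemma Phi_Phi0 x : Phi x = Phi0 x + / 2.
Proof.
  apply is_RInt_gen_unique.
  replace (Phi0 x + / 2) with (Phi0 x - - / 2) by ring.
  apply (is_RInt_gen_primitive phi phi_cont (Rbar_locally m_infty) (at_point x));
    [apply is_lim_Phi0_m |].
  intros Q HQ; apply locally_singleton in HQ; exact HQ.
Qed.

Lemma is_lim_RInt_phi_shift c :
  is_lim (fun M => RInt (fun s => phi (s + c)) 0 M) p_infty (1 - Phi c).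
Proof.
  apply (is_lim_ext (fun M => Phi0 (c + M) - Phi0 c)).
  { intros M; rewrite (RInt_shift phi phi_cont), Rplus_0_l, (Rplus_comm M).
    unfold Phi0; rewrite <- (RInt_Chasles_cont phi phi_cont 0 c); ring. }
  rewrite Phi_Phi0; replace (1 - (Phi0 c + / 2)) with (/ 2 - Phi0 c) by field.
  apply (is_lim_minus' _ (fun _ => Phi0 c));
    [apply is_lim_p_shift, is_lim_Phi0_p | apply is_lim_const].
Qed.

Lemma w_logistic y b : w y b = / (1 + exp (-2 * (y * b))).
Proof.
  unfold w; replace (exp (- (y * b))) with (exp (y * b) * exp (-2 * (y * b)))
    by (rewrite <- exp_plus; f_equal; ring).
  generalize (exp_pos (y * b)) (exp_pos (-2 * (y * b))); intros.
  field; repeat split; apply Rgt_not_eq; nra.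
Qed.

Lemma w_pos y b : 0 < w y b.
Proof. rewrite w_logistic; apply Rinv_0_lt_compat; generalize (exp_pos (-2 * (y * b))); lra. Qed.

Lemma w_opp y b : w (- y) b = 1 - w y b.
Proof.
  unfold w; replace (- y * b) with (- (y * b)) by ring; rewrite Ropp_involutive.
  generalize (exp_pos (y * b)) (exp_pos (- (y * b))); intros.
  field; repeat split; apply Rgt_not_eq; lra.
Qed.

Lemma w_le_1 y b : w y b <= 1.
Proof. generalize (w_pos (- y) b); rewrite w_opp; lra. Qed.

Lemma w_incr u v b : 0 <= b -> u <= v -> w u b <= w v b.
Proof.
  intros; rewrite !w_logistic; apply Rinv_le_contravar.
  - generalize (exp_pos (-2 * (v * b))); lra.
  - apply Rplus_le_compat_l, exp_le_exp; nra.
Qed.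

Definition P_integrand (xa xb xt y : R) : R :=
  w (y - xa) xb * (/ 2 * (phi (y - xt) + phi (y + xt))).

Lemma P_integrand_cont xa xb xt y : continuous (P_integrand xa xb xt) y.
Proof.
  unfold P_integrand, w, phi; continuous_by_derive.
  generalize sqrt_2PI_pos (exp_pos ((y + - xa) * xb)) (exp_pos (- ((y + - xa) * xb))).
  repeat split; lra.
Qed.

Lemma P_integrand_nonneg xa xb xt y : 0 <= P_integrand xa xb xt y.
Proof.
  apply Rmult_le_pos; [apply Rlt_le, w_pos |].
  generalize (phi_pos (y - xt)) (phi_pos (y + xt)); lra.
Qed.

Lemma RInt_P_integrand_le_1 xa xb xt a b : a <= b -> RInt (P_integrand xa xb xt) a b <= 1.
Proof.
  intros Hab.
  apply Rle_trans with (RInt (fun y => / 2 * phi (y + - xt) + / 2 * phi (y + xt)) a b).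
  - apply RInt_le; auto using ex_RInt_cont, P_integrand_cont.
    + apply ex_RInt_cont; intros;
        apply (@continuous_plus R_UniformSpace R_AbsRing R_NormedModule); apply scal_phi_shift_cont.
    + intros y _; unfold P_integrand; rewrite <- Rminus_def.
      generalize (phi_pos (y - xt)) (phi_pos (y + xt)) (w_le_1 (y - xa) xb) (w_pos (y - xa) xb).
      nra.
  - rewrite (@RInt_plus R_CompleteNormedModule) by apply ex_RInt_cont, scal_phi_shift_cont.
    rewrite !(@RInt_scal R_CompleteNormedModule) by apply ex_RInt_cont, phi_shift_cont.
    rewrite !(RInt_shift phi phi_cont).
    generalize (RInt_phi_le_1 (a + - xt) (b + - xt)) (RInt_phi_le_1 (a + xt) (b + xt)).
    unfold scal, plus; simpl; unfold mult; simpl; lra.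
Qed.

Section IntegrandPrimitive.

Variables xa xb xt : R.
Local Notation h := (P_integrand xa xb xt).
Local Notation H := (RInt h 0).

Lemma P_integrand_primitive_incr a b : a <= b -> H a <= H b.
Proof. apply RInt_0_incr; [apply P_integrand_cont | apply P_integrand_nonneg]. Qed.

Lemma P_integrand_primitive_bounds x : -1 <= H x <= 1.
Proof.
  assert (Hpos : forall a b, a <= b -> 0 <= RInt h a b).
  { intros; apply RInt_ge_0; auto using ex_RInt_cont, P_integrand_cont, P_integrand_nonneg. }
  destruct (Rle_or_lt 0 x) as [Hx | Hx].
  - generalize (Hpos 0 x Hx) (RInt_P_integrand_le_1 xa xb xt 0 x Hx); lra.
  - rewrite (RInt_swap_cont h (P_integrand_cont xa xb xt)).
    apply Rlt_le in Hx.
    generalize (Hpos x 0 Hx) (RInt_P_integrand_le_1 xa xb xt x 0 Hx); lra.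
Qed.

Lemma is_lim_P_symmetric c :
  is_lim (fun M => RInt (fun s => h (c - s) + h (c + s)) 0 M) p_infty (P xa xb xt).
Proof.
  destruct (incr_bounded_ex_lim_p H P_integrand_primitive_incr 1) as [Lp HLp];
    [intros; apply P_integrand_primitive_bounds |].
  destruct (incr_bounded_ex_lim_m H (-1) P_integrand_primitive_incr) as [Lm HLm];
    [intros; apply P_integrand_primitive_bounds |].
  replace (P xa xb xt) with (Lp - Lm).
  - apply (is_lim_ext (fun M => H (c + M) - H (c - M))).
    + intros; apply RInt_symmetrize, P_integrand_cont.
    + apply (is_lim_minus' (fun M => H (c + M)));
        [apply is_lim_p_shift | apply is_lim_m_reflect]; assumption.
  - symmetry; apply is_RInt_gen_unique.
    apply (is_RInt_gen_primitive h (P_integrand_cont xa xb xt)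
             (Rbar_locally m_infty) (Rbar_locally p_infty)); assumption.
Qed.

Lemma P_ge_of_symmetric_minorant c (g : R -> R) (L : R) :
  (forall s, continuous g s) -> (forall s, 0 <= s -> g s <= h (c - s) + h (c + s)) ->
  is_lim (fun M => RInt g 0 M) p_infty L -> L <= P xa xb xt.
Proof.
  intros Hg Hle HL.
  assert (Csym : forall s, continuous (fun s => h (c - s) + h (c + s)) s).
  { intros; apply (@continuous_plus R_UniformSpace R_AbsRing R_NormedModule);
      [apply continuous_reflect | apply continuous_translate]; apply P_integrand_cont. }
  change (Rbar_le L (P xa xb xt)).
  apply (is_lim_le_loc (fun M => RInt g 0 M) (fun M => RInt (fun s => h (c - s) + h (c + s)) 0 M)
           p_infty); [| exact HL | apply is_lim_P_symmetric].
  exists 0; intros M HM.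
  apply RInt_le; [lra | apply ex_RInt_cont; auto | apply ex_RInt_cont; auto |].
  intros; apply Hle; lra.
Qed.

End IntegrandPrimitive.

Lemma is_lim_RInt_scal_phi_shift k c :
  is_lim (fun M => RInt (fun s => k * phi (s + c)) 0 M) p_infty (k * (1 - Phi c)).
Proof.
  apply (is_lim_ext (fun M => k * RInt (fun s => phi (s + c)) 0 M)).
  - intros M; symmetry; apply (@RInt_scal R_CompleteNormedModule), ex_RInt_cont, phi_shift_cont.
  - apply (is_lim_scal_l _ k p_infty (1 - Phi c)), is_lim_RInt_phi_shift.
Qed.

Lemma Phi_0 : Phi 0 = / 2.
Proof. rewrite Phi_Phi0; unfold Phi0; rewrite RInt_point; unfold zero; simpl; ring. Qed.

Lemma P_integrand_pair_ge_tails xa xb xt s : xt <= xa -> 0 <= xt -> 0 <= s ->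
  / 2 * phi (s + (xa - xt)) + / 2 * phi (s + (xa + xt))
  <= P_integrand xa xb xt (xa - s) + P_integrand xa xb xt (xa + s).
Proof.
  intros. unfold P_integrand.
  replace (xa - s - xa) with (- s) by ring; replace (xa + s - xa) with s by ring; rewrite w_opp.
  replace (xa - s - xt) with (xa - xt - s) by ring.
  replace (xa - s + xt) with (xa + xt - s) by ring.
  replace (xa + s - xt) with (xa - xt + s) by ring.
  replace (xa + s + xt) with (xa + xt + s) by ring.
  rewrite !(Rplus_comm s).
  assert (phi (xa - xt + s) <= phi (xa - xt - s)) by (apply phi_add_le_sub; lra).
  assert (phi (xa + xt + s) <= phi (xa + xt - s)) by (apply phi_add_le_sub; lra).
  generalize (w_pos s xb) (w_le_1 s xb); nra.
Qed.

Lemma P_integrand_pair_ge_half_phi xa xb xt s : xa <= xt -> 0 <= xb ->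
  / 2 * phi (s + 0) <= P_integrand xa xb xt (xt - s) + P_integrand xa xb xt (xt + s).
Proof.
  intros. unfold P_integrand.
  replace (xt - s - xt) with (- s) by ring; replace (xt + s - xt) with s by ring.
  rewrite phi_opp, Rplus_0_r.
  assert (w (- s) xb <= w (xt - s - xa) xb) by (apply w_incr; lra).
  assert (w s xb <= w (xt + s - xa) xb) by (apply w_incr; lra).
  assert (w (- s) xb + w s xb = 1) by (rewrite w_opp; ring).
  generalize (phi_pos s) (phi_pos (xt - s + xt)) (phi_pos (xt + s + xt))
    (w_pos (xt - s - xa) xb) (w_pos (xt + s - xa) xb); nra.
Qed.

Lemma P_ge_tails xa xb xt : xt <= xa -> 0 <= xt ->
  / 2 * (1 - Phi (xa - xt)) + / 2 * (1 - Phi (xa + xt)) <= P xa xb xt.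
Proof.
  intros.
  apply (P_ge_of_symmetric_minorant xa xb xt xa
           (fun s => / 2 * phi (s + (xa - xt)) + / 2 * phi (s + (xa + xt)))).
  - intros; apply (@continuous_plus R_UniformSpace R_AbsRing R_NormedModule);
      apply scal_phi_shift_cont.
  - intros; apply P_integrand_pair_ge_tails; lra.
  - apply (is_lim_ext (fun M => RInt (fun s => / 2 * phi (s + (xa - xt))) 0 M
                             + RInt (fun s => / 2 * phi (s + (xa + xt))) 0 M)).
    + intros; symmetry; apply (@RInt_plus R_CompleteNormedModule);
        apply ex_RInt_cont, scal_phi_shift_cont.
    + apply (is_lim_plus' (fun M => RInt (fun s => / 2 * phi (s + (xa - xt))) 0 M));
        apply is_lim_RInt_scal_phi_shift.
Qed.

Lemma P_ge_quarter xa xb xt : xa <= xt -> 0 <= xb -> / 4 <= P xa xb xt.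
Proof.
  intros.
  replace (/ 4) with (/ 2 * (1 - Phi 0)) by (rewrite Phi_0; field).
  apply (P_ge_of_symmetric_minorant xa xb xt xt (fun s => / 2 * phi (s + 0))).
  - apply scal_phi_shift_cont.
  - intros; apply P_integrand_pair_ge_half_phi; lra.
  - apply is_lim_RInt_scal_phi_shift.
Qed.

Theorem lemma13 :
  (forall xa xb xt : R, xa >= xt -> xt >= 0 -> xb >= 0 ->
     P xa xb xt >= / 2 * (1 - Phi (xa - xt)) + / 2 * (1 - Phi (xa + xt))) /\
  (forall xa xb xt : R, 0 <= xa -> xa < xt -> xb >= 0 ->
     P xa xb xt >= / 4).
Proof.
  split.
  - intros xa xb xt Hat Ht _; apply Rle_ge, P_ge_tails; lra.
  - intros xa xb xt _ Hat Hb; apply Rle_ge, P_ge_quarter; lra.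
Qed.
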